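(* Fix $\lambda\vdash d$ and $x\in\mathbb{O}_\lambda\subset\mathcal{N}_d$. Consider the Braverman--Gaitsgory Weyl group actions on the zero weight spaces $H_{2d_\lambda}(\tilde{\mathfrak{g}}^x_{1^d})$ and $H^{2d_\lambda}(\tilde{\mathfrak{g}}^x_{1^d})$, in which $s_a$ acts by $T_a=\exp(E_a)\exp(-F_a)\exp(E_a)$. These actions equal the Springer actions tensored with the sign representation of $S_d$.
   Context: Take $n=d$, $G=\mathrm{GL}_d$, $\mathfrak{g}_d=\mathfrak{gl}_d$, $\mathcal{N}_d$ the nilpotent cone, and $\mathbb{O}_\lambda$ the nilpotent orbit of Jordan type $\lambda$. Let $\mathcal{P}_{d,d}$ be the compositions $\underline{d}=(d_1,\dots,d_d)$ of $d$, let $1^d=(1,\dots,1)$, and let $S_{\underline{d}}\subseteq S_d$ be the block subgroup. Let $\mathcal{F}_{\underline{d}}$ be the variety of flags $0=F_0\subseteq\dots\subseteq F_d=\mathbb{C}^d$ with $\dim F_i/F_{i-1}=d_i$. Set $\tilde{\mathfrak{g}}^x_{\underline{d}}=\{F_\bullet\in\mathcal{F}_{\underline{d}}: xF_i\subseteq F_i\ \forall i\}$ (reduced structure), so $\tilde{\mathfrak{g}}^x_{1^d}$ is the Springer fiber of $x$. Let $d_\lambda=\dim\mathcal{F}_{1^d}-\frac12\dim\mathbb{O}_\lambda$. Homology is Borel--Moore with complex coefficients. The Springer action of $S_d$ on $H_\bullet(\mathcal{F}_{1^d})$ is normalized so that $H_0$ is trivial. It preserves the image of the injection $H_{2d_\lambda}(\tilde{\mathfrak{g}}^x_{1^d})\hookrightarrow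 H_\bullet(\mathcal{F}_{1^d})$, which gives the Springer action on $V:=H_{2d_\lambda}(\tilde{\mathfrak{g}}^x_{1^d})$. On $H^{2d_\lambda}(\tilde{\mathfrak{g}}^x_{1^d})=V^*$ one takes the dual action. The Braverman--Gaitsgory action is defined via the isomorphism of perverse sheaves $(\mathbf{Gro}\otimes\mathbb{E}^{\otimes d})^{S_d}\cong(p_{d,d})_*\mathcal{K}$, taking $!$-stalks for homology and $*$-stalks for cohomology. On $\bigoplus_{\underline{d}}H_{2d_\lambda}(\tilde{\mathfrak{g}}^x_{\underline{d}})$ it is described as follows. - Proper pushforward along $\tilde{\mathfrak{g}}^x_{1^d}\to\tilde{\mathfrak{g}}^x_{\underline{d}}$ gives isomorphisms $V^{S_{\underline{d}}}\cong H_{2d_\lambda}(\tilde{\mathfrak{g}}^x_{\underline{d}})$. - With $\mathbb{E}=\mathbb{C}^d$ (basis $\theta_i$) and $\theta_{\underline{d}}=\theta_1^{\otimes d_1}\otimes\cdots\otimes\theta_d^{\otimes d_d}$, the map $v\mapsto\frac{1}{\#S_d}\sum_{y\in S_d}y(v)\otimes y(\theta_{\underline{d}})$ identifies $\bigoplus_{\underline{d}}V^{S_{\underline{d}}}$ with $(V\otimes\mathbb{E}^{\otimes d})^{S_d}$. - The $\mathrm{GL}(\mathbb{E})$-action on the latter, with Chevalley generators $E_a\theta_{a+1}=\theta_a$ and $F_a\theta_a=\theta_{a+1}$ (killing other basis vectors), is transported back. The cohomological action on $\bigoplus_{\underline{d}}H^{2d_\lambda}(\tilde{\mathfrak{g}}^x_{\underline{d}})$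 is the same construction applied to $V^*$. Here $(V^* )^{S_{\underline{d}}}$ is identified with $(V^{S_{\underline{d}}})^*$ by restriction. In both cases the $\underline{d}=1^d$ summand is the zero weight space for $\mathfrak{sl}_d$, and the operators $T_a$ ($a\in[d-1]$) define an $S_d$-action on it. *)

(* Algebraic model of the Braverman--Gaitsgory construction
   on the zero weight space, for an S_d-representation V. *)
From HB Require Import structures.
From mathcomp Require Import all_boot all_order all_algebra all_fingroup.
Set Implicit Arguments. Unset Strict Implicit. Unset Printing Implicit Defensive.
Import GRing.Theory.
Local Open Scope ring_scope.

Section BG.
Variables (C : fieldType) (V : lmodType C) (d : nat).

(* Index tuples (i_1,...,i_d) of basis tensors theta_{i_1} (x) ... (x) theta_{i_d}
   of E^{(x) d}, E = C^d (indices 0-based). *)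
Definition idx := {ffun 'I_d -> 'I_d}.

(* V (x) E^{(x) d}, an element being  sum_i f(i) (x) theta_i. *)
Definition tens := {ffun idx -> V}.

Definition setpos (j : idx) (k c : 'I_d) : idx :=
  [ffun l => if l == k then c else j l].

(* Diagonal S_d action: y (v (x) theta_i) = (rho y v) (x) theta_{i o y^-1}
   (tensor factor in position k moved to position y k). *)
Definition tensS (rho : 'S_d -> V -> V) (y : 'S_d) (f : tens) : tens :=
  [ffun j : idx => rho y (f [ffun k => j (y k)])].

(* Chevalley generators (acting on E^{(x)d} as derivations, on V trivially):
   E_a theta_{a+1} = theta_a, F_a theta_a = theta_{a+1}; here b = a+1. *)
Definition chevE (a b : 'I_d) (f : tens) : tens :=
  [ffun j : idx => \sum_(k < d | j k == a) f (setpos j k b)].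
Definition chevF (a b : 'I_d) (f : tens) : tens :=
  [ffun j : idx => \sum_(k < d | j k == b) f (setpos j k a)].

(* Exponential of an operator which is nilpotent of order <= d+1
   (true for +-E_a, +-F_a on E^{(x) d}), as the finite exponential series. *)
Definition exp_nil (X : tens -> tens) (f : tens) : tens :=
  \sum_(m < d.+1) ((m`!)%:R)^-1 *: iter m X f.

Definition Top (a b : 'I_d) (f : tens) : tens :=
  exp_nil (chevE a b) (exp_nil (fun g => - chevF a b g) (exp_nil (chevE a b) f)).

Definition base_tensor (v : V) : tens :=
  [ffun j : idx => if j == [ffun k => k] then v else 0].

(* The identification V = V^{S_{1^d}} -> (V (x) E^{(x) d})^{S_d},
   v |-> 1/#S_d  sum_y y(v) (x) y(theta_{1^d}). *)
Definition iotaBG (rho : 'S_d -> V -> V) (v : V) : tens :=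
  (#|'S_d|%:R)^-1 *: \sum_(y : 'S_d) tensS rho y (base_tensor v).

End BG.

(* Expand iota(v) as an average over y in S_d of the pure tensors
   rho(y) v (x) theta_{y^-1(1)} (x) ... (x) theta_{y^-1(d)}.  In each of them theta_a and
   theta_b occur exactly once, say at positions p and q, so E_a and F_a only move between
   the four pure tensors with (a,b), (a,a), (b,b), (b,a) at (p,q).  On this span E_a, F_a
   are nilpotent of order 3 and the three exponentials are explicit: T_a sends the pure
   tensor to minus the one with theta_a and theta_b exchanged, as in the sl_2 computation
   T_a (e_a (x) e_b) = (- e_b) (x) e_a.  Exchanging a and b in the index y^-1 amounts to
   replacing y by s_a y, so reindexing the average turns T_a into - rho(s_a). *)

From HB Require Import structures.
From mathcomp Require Import all_boot all_order all_algebra all_fingroup.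
From mathcomp Require Import zify.
Set Implicit Arguments. Unset Strict Implicit. Unset Printing Implicit Defensive.
Import GRing.Theory.
Local Open Scope ring_scope.

Lemma neq_ord_gt1 n (a b : 'I_n) : a != b -> (1 < n)%N.
Proof. case: a b => [i hi] [k hk]; rewrite -val_eqE /= => /eqP; lia. Qed.

Section PureTensors.
Variables (C : fieldType) (V : lmodType C) (d : nat).
Implicit Types (j : idx d) (w : V).

Definition pure_tensor j w : tens V d := [ffun i => if i == j then w else 0].

Lemma pure_tensorN j w : pure_tensor j (- w) = - pure_tensor j w.
Proof. by apply/ffunP=> i; rewrite !ffunE; case: eqP; rewrite ?oppr0. Qed.

Lemma setpos_at j k c : setpos j k c k = c.
Proof. by rewrite ffunE eqxx. Qed.

Lemma setposK j k c c' : setpos (setpos j k c) k c' = setpos j k c'.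
Proof. by apply/ffunP=> l; rewrite !ffunE; case: eqP. Qed.

Lemma setpos_id j k c : j k = c -> setpos j k c = j.
Proof. by move=> jk; apply/ffunP=> l; rewrite !ffunE; case: eqP => // ->. Qed.

Lemma setposC j k l c c' : k != l ->
  setpos (setpos j k c) l c' = setpos (setpos j l c') k c.
Proof.
move=> kl; apply/ffunP=> i; rewrite !ffunE.
by case: (eqVneq i k) => [->|]; rewrite ?(negbTE kl).
Qed.

Lemma chevE_is_linear a b : linear (@chevE C V d a b).
Proof.
move=> c f g; apply/ffunP=> j; rewrite !ffunE scaler_sumr -big_split.
by apply: eq_bigr=> k _; rewrite !ffunE.
Qed.

Lemma chevE_pure a b j w :
  chevE a b (pure_tensor j w) = \sum_(k < d | j k == b) pure_tensor (setpos j k a) w.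
Proof.
apply/ffunP=> i; rewrite sum_ffunE !ffunE big_mkcond [RHS]big_mkcond /=.
apply: eq_bigr=> k _; rewrite !ffunE -!if_and.
congr (if _ then _ else _); apply/andP/andP.
  by move=> -[/eqP ik /eqP <-]; rewrite setpos_at setposK setpos_id.
by move=> -[/eqP jk /eqP ->]; rewrite setpos_at setposK setpos_id.
Qed.

Lemma chevF_is_linear a b : linear (@chevF C V d a b).
Proof. exact: chevE_is_linear. Qed.

Lemma chevF_pure a b j w :
  chevF a b (pure_tensor j w) = \sum_(k < d | j k == a) pure_tensor (setpos j k b) w.
Proof. exact: chevE_pure. Qed.

Lemma scale_half_double w : 2%:R != 0 :> C -> 2%:R^-1 *: (w + w) = w.
Proof. by move=> two_neq0; rewrite -mulr2n -scaler_nat scalerA mulVf // scale1r. Qed.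

Lemma iter_linear (X : tens V d -> tens V d) m : linear X -> linear (iter m X).
Proof. by move=> linX; elim: m => [|m IHm] c f g //=; rewrite IHm linX. Qed.

Lemma exp_nil_linear (X : tens V d -> tens V d) : linear X -> linear (exp_nil X).
Proof.
move=> linX c f g; rewrite /exp_nil scaler_sumr -big_split; apply: eq_bigr => m _.
by rewrite iter_linear // scalerDr !scalerA mulrC.
Qed.

Lemma Top_is_linear a b : linear (@Top C V d a b).
Proof.
have linNF : linear (fun g => - @chevF C V d a b g).
  by move=> c f g; rewrite chevF_is_linear opprD scalerN.
have linE := @chevE_is_linear a b.
by move=> c f g; rewrite /Top !(exp_nil_linear linE) (exp_nil_linear linNF) exp_nil_linear.
Qed.

Lemma exp_nil_cube0 (X : tens V d -> tens V d) f : (1 < d)%N ->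
  X 0 = 0 -> X (X (X f)) = 0 -> exp_nil X f = f + X f + 2%:R^-1 *: X (X f).
Proof.
move=> d_gt1 X0 X3f; rewrite /exp_nil -(big_mkord xpredT (fun m => (m`!%:R)^-1 *: iter m X f)).
rewrite big_ltn // big_ltn ?ltnS 1?ltnW // big_ltn ?ltnS // big_nat_cond big1 /=.
  by rewrite invr1 !scale1r addr0 !addrA.
have iterX0 n : iter n X 0 = 0 by elim: n => //= n ->.
by move=> m /andP[/andP[m_ge3 _] _]; rewrite -(subnK m_ge3) iterD /= X3f iterX0 scaler0.
Qed.

End PureTensors.

HB.instance Definition _ (C : fieldType) (V : lmodType C) (d : nat) (a b : 'I_d) :=
  GRing.isLinear.Build C (tens V d) (tens V d) *:%R (chevE a b) (chevE_is_linear a b).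
HB.instance Definition _ (C : fieldType) (V : lmodType C) (d : nat) (a b : 'I_d) :=
  GRing.isLinear.Build C (tens V d) (tens V d) *:%R (chevF a b) (chevF_is_linear a b).
HB.instance Definition _ (C : fieldType) (V : lmodType C) (d : nat) (a b : 'I_d) :=
  GRing.isLinear.Build C (tens V d) (tens V d) *:%R (Top a b) (Top_is_linear a b).

Section TopOnPureTensor.
Variables (C : fieldType) (V : lmodType C) (d : nat) (a b : 'I_d).
Hypotheses (neq_ab : a != b) (two_neq0 : 2%:R != 0 :> C).
Variables (j : idx d) (p q : 'I_d).
Hypotheses (j_eq_a : forall k : 'I_d, (j k == a) = (k == p))
           (j_eq_b : forall k : 'I_d, (j k == b) = (k == q)).
Implicit Types (k : 'I_d) (u w : V).

(* [jxy] puts [x] at position [p] and [y] at position [q]; elsewhere it agrees with [j]. *)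
Local Notation jaa := (setpos j q a).
Local Notation jbb := (setpos j p b).
Local Notation jba := (setpos (setpos j q a) p b).
Local Notation E := (@chevE C V d a b).
Local Notation F := (@chevF C V d a b).

Let jp : j p = a. Proof. by apply/eqP; rewrite j_eq_a. Qed.
Let jq : j q = b. Proof. by apply/eqP; rewrite j_eq_b. Qed.
Let neq_pq : p != q. Proof. by apply: contraNneq neq_ab => pq; rewrite -jp -jq pq. Qed.

Let jaa_eq_a k : (jaa k == a) = (k == p) || (k == q).
Proof. by rewrite ffunE; have [->|_] := eqVneq k q; rewrite ?eqxx ?orbT ?j_eq_a ?orbF. Qed.
Let jaa_neq_b k : (jaa k == b) = false.
Proof. by rewrite ffunE; have [_|kq] := eqVneq k q; rewrite ?(negbTE neq_ab) ?j_eq_b ?(negbTE kq). Qed.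
Let jbb_neq_a k : (jbb k == a) = false.
Proof.
rewrite ffunE; have [_|kp] := eqVneq k p; first by rewrite eq_sym (negbTE neq_ab).
by rewrite j_eq_a (negbTE kp).
Qed.
Let jba_eq_a k : (jba k == a) = (k == q).
Proof.
rewrite ffunE; have [->|kp] := eqVneq k p; first by rewrite eq_sym (negbTE neq_ab) (negbTE neq_pq).
by rewrite jaa_eq_a (negbTE kp).
Qed.
Let jba_eq_b k : (jba k == b) = (k == p).
Proof. by rewrite ffunE; have [_|_] := eqVneq k p; rewrite /= ?eqxx ?jaa_neq_b. Qed.

Let setpos_jaa : setpos jaa q b = j.
Proof. by rewrite setposK setpos_id. Qed.
Let setpos_jba_p : setpos jba p a = jaa.
Proof. by rewrite setposK setpos_id // ffunE (negbTE neq_pq). Qed.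
Let setpos_jba_q : setpos jba q b = jbb.
Proof. by rewrite (setposC _ _ _ neq_pq) setposK (setpos_id jq). Qed.

Let E_j u : E (pure_tensor j u) = pure_tensor jaa u.
Proof. by rewrite chevE_pure (eq_bigl _ _ j_eq_b) big_pred1_eq. Qed.
Let E_jaa u : E (pure_tensor jaa u) = 0.
Proof. by rewrite chevE_pure big_pred0. Qed.
Let E_jba u : E (pure_tensor jba u) = pure_tensor jaa u.
Proof. by rewrite chevE_pure (eq_bigl _ _ jba_eq_b) big_pred1_eq setpos_jba_p. Qed.
Let F_j u : F (pure_tensor j u) = pure_tensor jbb u.
Proof. by rewrite chevF_pure (eq_bigl _ _ j_eq_a) big_pred1_eq. Qed.
Let F_jbb u : F (pure_tensor jbb u) = 0.
Proof. by rewrite chevF_pure big_pred0. Qed.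
Let F_jba u : F (pure_tensor jba u) = pure_tensor jbb u.
Proof. by rewrite chevF_pure (eq_bigl _ _ jba_eq_a) big_pred1_eq setpos_jba_q. Qed.
Let F_jaa u : F (pure_tensor jaa u) = pure_tensor jba u + pure_tensor j u.
Proof.
rewrite chevF_pure (bigD1 p) ?jaa_eq_a ?eqxx //=; congr (_ + _).
rewrite (eq_bigl (pred1 q)) ?big_pred1_eq ?setpos_jaa // => k /=.
by rewrite jaa_eq_a; have [->|_] := eqVneq k p; rewrite ?(negbTE neq_pq) ?andbT.
Qed.

Let d_gt1 : (1 < d)%N := neq_ord_gt1 neq_ab.

Let exp_E_j w : exp_nil E (pure_tensor j w) = pure_tensor j w + pure_tensor jaa w.
Proof. by rewrite exp_nil_cube0 ?E_j ?E_jaa ?(linear0 E) ?scaler0 ?addr0. Qed.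

Let exp_NF_j_jaa w :
  exp_nil (fun g => - F g) (pure_tensor j w + pure_tensor jaa w)
  = pure_tensor jaa w - pure_tensor jba w.
Proof.
have Ff : F (pure_tensor j w + pure_tensor jaa w)
    = pure_tensor jbb w + (pure_tensor jba w + pure_tensor j w).
  by rewrite (linearD F) /= F_j F_jaa.
have FFf : F (F (pure_tensor j w + pure_tensor jaa w)) = pure_tensor jbb w + pure_tensor jbb w.
  by rewrite Ff !(linearD F) /= F_jbb F_jba F_j add0r.
rewrite exp_nil_cube0 /= ?(linear0 F) ?oppr0 //; last first.
  by rewrite !(linearN F) /= !opprK FFf (linearD F) /= F_jbb add0r oppr0.
rewrite (linearN F) /= opprK FFf scale_half_double // Ff.
rewrite addrAC opprD addrA addrK.
by rewrite [pure_tensor j w + _]addrC [pure_tensor jba w + _]addrC addrKA.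
Qed.

Let exp_E_jaa_jba w :
  exp_nil E (pure_tensor jaa w - pure_tensor jba w) = - pure_tensor jba w.
Proof.
have Ef : E (pure_tensor jaa w - pure_tensor jba w) = - pure_tensor jaa w.
  by rewrite (linearB E) /= E_jaa E_jba sub0r.
have EEf : E (E (pure_tensor jaa w - pure_tensor jba w)) = 0.
  by rewrite Ef (linearN E) /= E_jaa oppr0.
rewrite exp_nil_cube0 //.
- by rewrite EEf Ef scaler0 addr0 addrAC subrr add0r.
- exact: linear0.
- by rewrite EEf; exact: linear0.
Qed.

Let jba_tperm : jba = [ffun k => tperm a b (j k)].
Proof.
apply/ffunP=> k; rewrite !ffunE; have [->|kp] := eqVneq k p; first by rewrite jp tpermL.
have [->|kq] := eqVneq k q; first by rewrite jq tpermR.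
by rewrite tpermD // eq_sym ?j_eq_a ?j_eq_b.
Qed.

Lemma Top_pure w : Top a b (pure_tensor j w) = pure_tensor [ffun k => tperm a b (j k)] (- w).
Proof.
by rewrite /Top exp_E_j exp_NF_j_jaa exp_E_jaa_jba -jba_tperm (pure_tensorN jba).
Qed.

End TopOnPureTensor.

Lemma Top_pure_perm (C : fieldType) (V : lmodType C) d (a b : 'I_d) (s : 'S_d) (w : V) :
  a != b -> 2%:R != 0 :> C ->
  Top a b (pure_tensor [ffun k => s k] w) = pure_tensor [ffun k => tperm a b (s k)] (- w).
Proof.
have s_eq c k : ([ffun k => s k] k == c) = (k == (s^-1)%g c).
  by rewrite ffunE -{1}(permKV s c) (inj_eq perm_inj).
move=> neq_ab two_neq0; rewrite (Top_pure neq_ab two_neq0 (s_eq a) (s_eq b)).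
by congr pure_tensor; apply/ffunP => k; rewrite !ffunE.
Qed.

Section BravermanGaitsgoryAction.
Variables (C : fieldType) (V : lmodType C) (d : nat) (rho : 'S_d -> {linear V -> V}).
Hypothesis rhoM : forall (y z : 'S_d) (v : V), rho (y * z)%g v = rho z (rho y v).
Local Notation rhoF := (fun y => (rho y : V -> V)).

Lemma tensS_base_tensor (y : 'S_d) (u : V) :
  tensS rhoF y (base_tensor d u) = pure_tensor [ffun k => (y^-1)%g k] (rho y u).
Proof.
apply/ffunP => j; rewrite !ffunE.
have -> : ([ffun k => j (y k)] == [ffun k => k]) = (j == [ffun k => (y^-1)%g k]).
  apply/eqP/eqP => [jy|->]; apply/ffunP => k; rewrite !ffunE; last by rewrite permK.
  by have := congr1 (fun f : idx d => f ((y^-1)%g k)) jy; rewrite !ffunE permKV.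
by case: ifP; rewrite ?(linear0 (rho y)).
Qed.

Lemma Top_iotaBG a b v : a != b -> 2%:R != 0 :> C ->
  Top a b (iotaBG rhoF v) = iotaBG rhoF (- rho (tperm a b) v).
Proof.
move=> neq_ab two_neq0.
rewrite /iotaBG linearZ linear_sum /=; congr (_ *: _).
under eq_bigr => y _ do rewrite tensS_base_tensor (Top_pure_perm _ _ neq_ab two_neq0).
under [RHS]eq_bigr => y _ do rewrite tensS_base_tensor.
rewrite [LHS](reindex_inj (mulgI (tperm a b))); apply: eq_bigr => y _.
congr pure_tensor; last by rewrite rhoM linearN.
by apply/ffunP => k; rewrite !ffunE invMg permM permKV.
Qed.

End BravermanGaitsgoryAction.

Theorem mainTheorem6 (C : numClosedFieldType) (V : lmodType C) (d : nat)
  (rho : 'S_d -> {linear V -> V})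
  (rho1 : forall v : V, rho 1%g v = v)
  (rhoM : forall (y z : 'S_d) (v : V), rho (y * z)%g v = rho z (rho y v))
  (a b : 'I_d) (hab : nat_of_ord b = (nat_of_ord a).+1) (v : V) :
  Top a b (iotaBG (fun y => (rho y : V -> V)) v)
  = iotaBG (fun y => (rho y : V -> V)) (- rho (tperm a b) v).
Proof.
apply: Top_iotaBG => //; first by rewrite -val_eqE /= hab ltn_eqF.
by rewrite Num.Theory.pnatr_eq0.
Qed.
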